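(* Consider an $N$-agent Markov decision process with finite state space $\mathcal{S}$, finite individual action spaces $\mathcal{A}^i$, joint action space $\mathcal{A}=\prod_{i=1}^N\mathcal{A}^i$, bounded individual rewards and discount factor $\gamma\in(0,1)$. Let $\boldsymbol{\pi}'$ and $\boldsymbol{\pi}$ be joint policies and let $\boldsymbol{\tilde{\Pi}}=(\boldsymbol{\tilde{\pi}}^1,\dots,\boldsymbol{\tilde{\pi}}^N)$ be a collection of suggesting joint policies. Then $$\zeta_{\boldsymbol{\pi}'}(\boldsymbol{\tilde{\Pi}}) - \zeta_{\boldsymbol{\pi}'}(\boldsymbol{\pi}) \leq f^{\boldsymbol{\pi}'} + \sum_{i=1}^N \frac{1}{2} \max_{s, \boldsymbol{a}} \big| A_i^{\boldsymbol{\pi}'}(s, \boldsymbol{a}) \big| \cdot \sum_{s, \boldsymbol{a}}\big(\boldsymbol{\tilde{\pi}}^i(\boldsymbol{a}|s) - \boldsymbol{\pi}(\boldsymbol{a}|s)\big)^2,$$ where $f^{\boldsymbol{\pi}'} = \sum_{i=1}^N \frac{1}{2} \max_{s, \boldsymbol{a}} \big| A_i^{\boldsymbol{\pi}'}(s, \boldsymbol{a}) \big| \cdot |\mathcal{A}| \cdot \Vert d^{\boldsymbol{\pi}'} \Vert_2^2$ and $\|d^{\boldsymbol{\pi}'}\|_2^2=\sum_s (d^{\boldsymbol{\pi}'}(s))^2$.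
   Context: Trajectories under a joint policy $\boldsymbol{\pi}$ (a distribution $\boldsymbol{\pi}(\cdot|s)$ over joint actions, given by a product of individual policies) are generated by $s_0\sim d(s_0)$, $\boldsymbol{a}_t\sim\boldsymbol{\pi}(\cdot|s_t)$, $s_{t+1}\sim\mathcal{P}(\cdot|s_t,\boldsymbol{a}_t)$, rewards $r_t^i=\mathcal{R}^i(s_t,\boldsymbol{a}_t)$. Individual value functions $V_i^{\boldsymbol{\pi}}(s)=\mathbb{E}[\sum_{t\ge0}\gamma^t r^i_t\mid s_0=s]$, $Q_i^{\boldsymbol{\pi}}(s,\boldsymbol{a})=\mathbb{E}[\sum_{t\ge0}\gamma^t r^i_t\mid s_0=s,\boldsymbol{a}_0=\boldsymbol{a}]$, advantage $A_i^{\boldsymbol{\pi}}=Q_i^{\boldsymbol{\pi}}-V_i^{\boldsymbol{\pi}}$. The state visitation distribution is $d^{\boldsymbol{\pi}}(s)=\sum_{t\ge0}\gamma^tP(s_t=s\mid\boldsymbol{\pi})$. A suggesting joint policy of agent $i$ is $\boldsymbol{\tilde{\pi}}^i(\boldsymbol{a}|s)=\prod_{j=1}^N\pi^{ij}(a^j|s)$, where $\pi^{ii}=\pi^i$ is agent $i$'s own policy and, for $j\ne i$, $\pi^{ij}$ is an arbitrary policy for agent $j$ (''agent $i$'s suggestion for agent $j$''). For a collection $\boldsymbol{\tilde{\Pi}}=(\boldsymbol{\tilde{\pi}}^1,\dots,\boldsymbol{\tilde{\pi}}^N)$, $\zeta_{\boldsymbol{\pi}'}(\boldsymbol{\tilde{\Pi}})=\sum_{i}\sum_s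 d^{\boldsymbol{\pi}'}(s)\sum_{\boldsymbol{a}}\boldsymbol{\tilde{\pi}}^i(\boldsymbol{a}|s)A_i^{\boldsymbol{\pi}'}(s,\boldsymbol{a})$, and for a single joint policy $\boldsymbol{\pi}$, $\zeta_{\boldsymbol{\pi}'}(\boldsymbol{\pi})=\sum_s d^{\boldsymbol{\pi}'}(s)\sum_{\boldsymbol{a}}\boldsymbol{\pi}(\boldsymbol{a}|s)\sum_iA_i^{\boldsymbol{\pi}'}(s,\boldsymbol{a})$ (the case $\boldsymbol{\tilde{\pi}}^i=\boldsymbol{\pi}$ for all $i$). *)

From HB Require Import structures.
From mathcomp Require Import all_boot all_order all_algebra.
From mathcomp Require Import all_classical all_reals all_analysis.
Set Implicit Arguments. Unset Strict Implicit. Unset Printing Implicit Defensive.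
Import Order.TTheory GRing.Theory Num.Theory.
Local Open Scope ring_scope.

Section MMDP.
Variables (R : realType) (S : finType) (N : nat) (Act : 'I_N -> finType).

Definition jact := {dffun forall i : 'I_N, Act i}.

Definition infsum (u : nat -> R) : R := limn (fun n => \sum_(0 <= t < n) u t).

Definition is_policy (j : 'I_N) (p : S -> Act j -> R) :=
  (forall s a, 0 <= p s a) /\ (forall s, \sum_a p s a = 1).

Definition jpol (p : forall j : 'I_N, S -> Act j -> R) (s : S) (a : jact) : R :=
  \prod_(j < N) p j s (a j).

Variables (P : S -> jact -> S -> R)      (* P(s'|s,a) *)
          (d0 : S -> R)                  (* initial state distribution *)
          (Rw : 'I_N -> S -> jact -> R)
          (gamma : R).

Fixpoint stdist (pol : S -> jact -> R) (mu : S -> R) (t : nat) : S -> R :=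
  match t with
  | 0 => mu
  | t'.+1 => fun s' => \sum_s stdist pol mu t' s * \sum_a pol s a * P s a s'
  end.

Definition exp_rew (pol : S -> jact -> R) (mu : S -> R) (i : 'I_N) (t : nat) : R :=
  \sum_s stdist pol mu t s * \sum_a pol s a * Rw i s a.

Definition dirac (s0 : S) : S -> R := fun s => (s == s0)%:R.

Definition Vfun (pol : S -> jact -> R) (i : 'I_N) (s : S) : R :=
  infsum (fun t => gamma ^+ t * exp_rew pol (dirac s) i t).

(* Q_i^pi(s,a) = E[sum_t gamma^t r^i_t | s_0 = s, a_0 = a]:
   r_0 = R^i(s,a), then s_1 ~ P(.|s,a) and the policy is followed *)
Definition Qfun (pol : S -> jact -> R) (i : 'I_N) (s : S) (a : jact) : R :=
  infsum (fun t => gamma ^+ t *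
     match t with 0 => Rw i s a | t'.+1 => exp_rew pol (P s a) i t' end).

Definition Afun (pol : S -> jact -> R) (i : 'I_N) (s : S) (a : jact) : R :=
  Qfun pol i s a - Vfun pol i s.

Definition dvisit (pol : S -> jact -> R) (s : S) : R :=
  infsum (fun t => gamma ^+ t * stdist pol d0 t s).

Definition zeta_coll (pol' : S -> jact -> R) (tpol : 'I_N -> S -> jact -> R) : R :=
  \sum_(i < N) \sum_s dvisit pol' s * \sum_a tpol i s a * Afun pol' i s a.

Definition zeta_joint (pol' : S -> jact -> R) (pol : S -> jact -> R) : R :=
  \sum_s dvisit pol' s * \sum_a pol s a * \sum_(i < N) Afun pol' i s a.

Definition maxabsA (pol' : S -> jact -> R) (i : 'I_N) : R :=
  \big[Num.max/0]_(s : S) \big[Num.max/0]_(a : jact) `|Afun pol' i s a|.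

Definition fterm (pol' : S -> jact -> R) : R :=
  \sum_(i < N) 2^-1 * maxabsA pol' i * #|{: jact}|%:R * \sum_s (dvisit pol' s) ^+ 2.

End MMDP.

From HB Require Import structures.
From mathcomp Require Import all_boot all_order all_algebra.
From mathcomp Require Import all_classical all_reals all_analysis.
Import Order.TTheory GRing.Theory Num.Theory.
Local Open Scope ring_scope.

(* Both sides expand into sums over (i, s, a), and the inequality holds term by
   term: with x = d(s), y = tpol^i(a|s) - pol(a|s) and |A_i(s,a)| <= M_i,
   AM-GM gives x y A_i(s,a) <= M_i (x^2 + y^2) / 2.  Summing the x^2 part over
   the |A| joint actions yields f^{pi'}.  No property of the MDP, of d or of the
   policies is used. *)

Lemma mulr_le_mean_square (R : realFieldType) (x y a M : R) :
  `|a| <= M -> x * y * a <= 2^-1 * M * (x ^+ 2 + y ^+ 2).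
Proof.
move=> le_aM; have M_ge0 : 0 <= M := le_trans (normr_ge0 a) le_aM.
have le_xy : `|x| * `|y| <= (x ^+ 2 + y ^+ 2) / 2.
  by rewrite -(real_normK (num_real x)) -(real_normK (num_real y)) leif_mean_square.
apply: le_trans (ler_norm _) _.
rewrite !normrM [leRHS]mulrC [leRHS]mulrA.
by apply: ler_pM; rewrite ?mulr_ge0.
Qed.

Section AdvantageSums.
Variables (R : realType) (S : finType) (N : nat) (Act : 'I_N -> finType).
Variables (P : S -> jact Act -> S -> R) (d0 : S -> R)
          (Rw : 'I_N -> S -> jact Act -> R) (gamma : R).
Variable pol' : S -> jact Act -> R.

Local Notation d := (dvisit P d0 gamma pol').
Local Notation A := (Afun P Rw gamma pol').
Local Notation M := (maxabsA P Rw gamma pol').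

Lemma le_maxabsA i s a : `|A i s a| <= M i.
Proof. exact: le_trans (le_bigmax _ _ a) (le_bigmax _ _ s). Qed.

Lemma zeta_coll_sub_joint (tpol : 'I_N -> S -> jact Act -> R) pol :
  zeta_coll P d0 Rw gamma pol' tpol - zeta_joint P d0 Rw gamma pol' pol
  = \sum_(i < N) \sum_s \sum_a d s * (tpol i s a - pol s a) * A i s a.
Proof.
have -> : zeta_joint P d0 Rw gamma pol' pol
    = \sum_(i < N) \sum_s d s * \sum_a pol s a * A i s a.
  rewrite /zeta_joint exchange_big; apply: eq_bigr => s _.
  rewrite -mulr_sumr exchange_big; congr (_ * _); apply: eq_bigr => a _.
  by rewrite mulr_sumr.
rewrite -sumrB; apply: eq_bigr => i _; rewrite -sumrB; apply: eq_bigr => s _.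
rewrite -mulrBr -sumrB mulr_sumr; apply: eq_bigr => a _.
by rewrite -mulrBl mulrA.
Qed.

Lemma fterm_sum :
  fterm P d0 Rw gamma pol'
  = \sum_(i < N) \sum_s \sum_(a : jact Act) 2^-1 * M i * d s ^+ 2.
Proof.
apply: eq_bigr => i _; rewrite mulr_sumr; apply: eq_bigr => s _.
by rewrite sumr_const mulrAC mulr_natr.
Qed.

End AdvantageSums.

Theorem lemma2 (R : realType) (S : finType) (N : nat) (Act : 'I_N -> finType)
  (P : S -> jact Act -> S -> R) (d0 : S -> R) (Rw : 'I_N -> S -> jact Act -> R)
  (gamma : R)
  (pi' pi : forall j : 'I_N, S -> Act j -> R)
  (sug : 'I_N -> forall j : 'I_N, S -> Act j -> R) :
  (forall s a s', 0 <= P s a s') ->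
  (forall s a, \sum_s' P s a s' = 1) ->
  (forall s, 0 <= d0 s) -> \sum_s d0 s = 1 ->
  0 < gamma < 1 ->
  (forall j, is_policy (pi' j)) ->
  (forall j, is_policy (pi j)) ->
  (forall i j, is_policy (sug i j)) ->
  (forall i, sug i i = pi i) ->
  let pol' := jpol pi' in
  let pol := jpol pi in
  let tpol := fun i => jpol (sug i) in
  zeta_coll P d0 Rw gamma pol' tpol - zeta_joint P d0 Rw gamma pol' pol
  <= fterm P d0 Rw gamma pol'
     + \sum_(i < N) 2^-1 * maxabsA P Rw gamma pol' i
         * \sum_s \sum_a (tpol i s a - pol s a) ^+ 2.
Proof.
move=> _ _ _ _ _ _ _ _ _; cbv zeta.
rewrite zeta_coll_sub_joint fterm_sum -big_split; apply: ler_sum => i _.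
rewrite mulr_sumr -big_split; apply: ler_sum => s _.
rewrite mulr_sumr -big_split; apply: ler_sum => a _.
rewrite /= -mulrDr; exact/mulr_le_mean_square/le_maxabsA.
Qed.
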